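(* Let $(\Theta,\mathcal F,\nu)$ be a measure space (with $\Theta$ discrete or continuous), and for each $\vartheta\in\Theta$ let $(V_{n,k}(\vartheta))_{1\le k\le n}$ and $(W_s(\vartheta))_{s\ge1}$ be nonnegative, measurable in $\vartheta$. Suppose that for each $n$, $\Pi_n$ is a finitely exchangeable random partition of $[n]$ whose EPPF is $$p^{(n)}(n_1,\dots,n_k)=\int_\Theta V_{n,k}(\vartheta)\prod_{j=1}^kW_{n_j}(\vartheta)\,\nu(d\vartheta)$$ (a mixture of Gibbs partitions). Then for every $n\ge1$: if $(W_s(\vartheta))_{s\ge1}$ is log-convex for each $\vartheta\in\Theta$, then $p^{(n)}$ is balance-averse; if $(W_s(\vartheta))_{s\ge1}$ is log-concave for each $\vartheta\in\Theta$, then $p^{(n)}$ is balance-seeking.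
   Context: For positive integers $k\le n$, $\mathcal I_n^k$ denotes the set of nonincreasing $k$-tuples $\mathbf n=(n_1,\dots,n_k)$ of positive integers with $\sum_jn_j=n$. For $\mathbf n,\mathbf n'\in\mathcal I_n^k$ write $\mathbf n\prec\mathbf n'$ if $\mathbf n\neq\mathbf n'$ and $\sum_{j=1}^J n_j\ge\sum_{j=1}^J n'_j$ for all $J=1,\dots,k$. The EPPF of a finitely exchangeable (i.e. permutation-invariant in law) random partition $\Pi_n$ of $[n]$ is the symmetric function $p^{(n)}$ with $\mathbb P(\Pi_n=\{S_1,\dots,S_k\})=p^{(n)}(|S_1|,\dots,|S_k|)$. It is balance-averse if for all $k\le n$ and $\mathbf n,\mathbf n'\in\mathcal I^k_n$, $\mathbf n\prec\mathbf n'$ implies $p^{(n)}(\mathbf n)\ge p^{(n)}(\mathbf n')$, and balance-seeking if it implies $p^{(n)}(\mathbf n)\le p^{(n)}(\mathbf n')$. A sequence $(W_s)_{s\ge1}$ is log-convex if $W_s^2\le W_{s-1}W_{s+1}$ for all $s\ge2$, and log-concave if $W_s^2\ge W_{s-1}W_{s+1}$ for all $s\ge2$ and it has no internal zeros (no $a<b<c$ with $W_a>0,W_b=0,W_c>0$). *)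

From HB Require Import structures.
From mathcomp Require Import all_boot all_order all_algebra.
From mathcomp Require Import all_classical all_reals all_analysis.
Set Implicit Arguments. Unset Strict Implicit. Unset Printing Implicit Defensive.
Import Order.TTheory GRing.Theory Num.Theory.
Local Open Scope ring_scope.

Definition Ink (n k : nat) (ns : seq nat) : bool :=
  [&& size ns == k, sorted geq ns, all (fun x => 0 < x)%N ns & sumn ns == n].

Definition prec (k : nat) (ns ns' : seq nat) : Prop :=
  ns <> ns' /\ forall J : nat, (1 <= J <= k)%N -> (sumn (take J ns') <= sumn (take J ns))%N.

Definition balance_averse (R : realType) (n : nat) (p : seq nat -> \bar R) : Prop :=
  forall k ns ns', (1 <= k <= n)%N -> Ink n k ns -> Ink n k ns' -> prec k ns ns' ->
    (p ns' <= p ns)%E.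

Definition balance_seeking (R : realType) (n : nat) (p : seq nat -> \bar R) : Prop :=
  forall k ns ns', (1 <= k <= n)%N -> Ink n k ns -> Ink n k ns' -> prec k ns ns' ->
    (p ns <= p ns')%E.

Definition log_convex (R : realType) (W : nat -> R) : Prop :=
  forall s, (2 <= s)%N -> W s ^+ 2 <= W s.-1 * W s.+1.

Definition log_concave (R : realType) (W : nat -> R) : Prop :=
  (forall s, (2 <= s)%N -> W s.-1 * W s.+1 <= W s ^+ 2) /\
  (forall a b c, (1 <= a)%N -> (a < b)%N -> (b < c)%N ->
     ~ (0 < W a /\ W b = 0 /\ 0 < W c)).

Definition block_sizes (n : nat) (pi : {set {set 'I_n}}) : seq nat :=
  sort geq [seq #|B| | B : {set 'I_n} <- enum pi].

Definition random_partition_with_EPPF (R : realType) (n : nat)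
    (p : seq nat -> \bar R) : Prop :=
  exists P : {set {set 'I_n}} -> R,
    [/\ forall pi, 0 <= P pi,
        \sum_(pi : {set {set 'I_n}}) P pi = 1,
        forall pi : {set {set 'I_n}}, ~~ finset.partition pi [set: 'I_n]%SET -> P pi = 0
      & forall pi : {set {set 'I_n}}, finset.partition pi [set: 'I_n]%SET -> (P pi)%:E = p (block_sizes pi)].

Definition gibbs_mixture_eppf (R : realType) (d : measure_display)
    (T : measurableType d) (nu : {measure set T -> \bar R})
    (V : nat -> nat -> T -> R) (W : nat -> T -> R) (n : nat) (ns : seq nat) : \bar R :=
  (\int[nu]_(th in [set: T]) (V n (size ns) th * \prod_(j <- ns) W j th)%:E)%E.

From HB Require Import structures.
From mathcomp Require Import all_boot all_order all_algebra.
From mathcomp Require Import all_classical all_reals all_analysis.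
From mathcomp Require Import measurable_realfun lra zify.
Set Implicit Arguments. Unset Strict Implicit. Unset Printing Implicit Defensive.
Import Order.TTheory GRing.Theory Num.Theory.
Local Open Scope ring_scope.

(* For fixed [th] the Gibbs weight [prod_j W_{n_j}] is [exp] of
   [sum_j log W_{n_j}], and [log W] is a discrete convex (resp. concave)
   function, so by Karamata's inequality this sum can only grow (resp. shrink)
   when the block sizes become less balanced, i.e. along [prec]; integrating
   against the nonnegative [V_{n,k}(th) nu(d th)] keeps the inequality.
   Karamata's inequality for integer sequences comes from writing a convex [g]
   on [L, U] as an affine function plus a nonnegative combination of hinges
   [x |-> (x - t)_+], whose sums over the block sizes are exactly what
   majorization controls.  Zero weights are handled apart: a log-convex
   sequence with a zero vanishes from index 2 on, and a log-concave one has no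
   zero between two positive terms. *)

Section Majorization.
Local Open Scope nat_scope.

(* Truncated subtraction makes this the sum of the hinges [(x - t)_+]. *)
Definition excess (s : seq nat) (t : nat) : nat := \sum_(x <- s) (x - t).

Definition majorizes (a b : seq nat) : Prop :=
  [/\ size a = size b, sumn a = sumn b & forall J, sumn (take J b) <= sumn (take J a)].

Lemma excess_nil t : excess [::] t = 0.
Proof. exact: big_nil. Qed.

Lemma excess_cons x s t : excess (x :: s) t = (x - t) + excess s t.
Proof. exact: big_cons. Qed.

Lemma excess_eq0 s t : (excess s t == 0) = all (fun x => x <= t) s.
Proof. by rewrite sum_nat_seq_eq0; apply: eq_all => x; rewrite subn_eq0. Qed.

Lemma excess_add_size s t :
  excess s t + size s * t = \sum_(x <- s) (t - x) + sumn s.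
Proof.
elim: s => [|x s IH]; first by rewrite excess_nil big_nil.
rewrite excess_cons big_cons /=; lia.
Qed.

(* A decreasing sequence splits at its last entry above [t]: the excess over
   [t] is then read off a partial sum. *)
Lemma excess_sorted_take b t : sorted geq b ->
  exists2 J, J <= size b & excess b t + J * t = sumn (take J b).
Proof.
elim: b => [|x b IH] b_sorted; first by exists 0; rewrite ?excess_nil.
have [J J_le eJ] := IH (path_sorted b_sorted).
have b_le_x : all (fun y => y <= x) b := order_path_min (rev_trans leq_trans) b_sorted.
have [x_le_t | t_lt_x] := leqP x t.
- exists 0 => //; rewrite addn0 take0; apply/eqP; rewrite excess_eq0 /= x_le_t.
  by apply: sub_all b_le_x => y /= y_le_x; apply: leq_trans x_le_t.
- by exists J.+1 => //=; rewrite excess_cons; lia.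
Qed.

Lemma sumn_take_le_excess a t J : sumn (take J a) <= excess a t + J * t.
Proof.
elim: a J => [|x a IH] [|J] //=; rewrite excess_cons; have := IH J; lia.
Qed.

Lemma excess_le_of_take_le a b : sorted geq b ->
  (forall J, sumn (take J b) <= sumn (take J a)) ->
  forall t, excess b t <= excess a t.
Proof.
move=> b_sorted take_le t; have [J _ eJ] := excess_sorted_take t b_sorted.
have := sumn_take_le_excess a t J; have := take_le J; lia.
Qed.

Lemma majorizes_range a b L U : sorted geq b -> majorizes a b ->
  {in a, forall x, L <= x <= U} ->
  [/\ {in b, forall x, L <= x <= U}, excess b L = excess a L
    & forall t, excess b t <= excess a t].
Proof.
move=> b_sorted [size_ab sum_ab take_le] a_range.
have excess_le := excess_le_of_take_le b_sorted take_le.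
have a_ge_L : \sum_(x <- a) (L - x) = 0.
  apply/eqP; rewrite sum_nat_seq_eq0; apply/allP => x /a_range /andP[+ _] /=.
  by rewrite subn_eq0.
have b_le_U : all (fun x => x <= U) b.
  have /eqP a_le_U : excess a U == 0.
    by rewrite excess_eq0; apply/allP => x /a_range /andP[].
  by rewrite -excess_eq0 -leqn0 -a_le_U excess_le.
have b_ge_L : \sum_(x <- b) (L - x) = 0.
  have := excess_add_size a L; have := excess_add_size b L; have := excess_le L.
  rewrite size_ab sum_ab a_ge_L; lia.
have eL : excess b L = excess a L.
  have := excess_add_size a L; have := excess_add_size b L.
  rewrite size_ab sum_ab a_ge_L b_ge_L; lia.
split=> // x xb; rewrite (allP b_le_U x xb) andbT.
move/eqP: b_ge_L; rewrite sum_nat_seq_eq0 => /allP/(_ x xb).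
by rewrite subn_eq0.
Qed.

End Majorization.

Section Compositions.
Local Open Scope nat_scope.

Lemma InkP n k ns : Ink n k ns ->
  [/\ size ns = k, sorted geq ns, all (fun x => 0 < x) ns & sumn ns = n].
Proof. by case/and4P => /eqP-> -> -> /eqP->. Qed.

Lemma majorizes_of_prec n k ns ns' :
  Ink n k ns -> Ink n k ns' -> prec k ns ns' -> majorizes ns ns'.
Proof.
move=> /InkP[size_ns _ _ sum_ns] /InkP[size_ns' _ _ sum_ns'] [_ take_le].
split; [by rewrite size_ns size_ns' | by rewrite sum_ns sum_ns' |] => J.
have [->|J_gt0] := posnP J; first by rewrite !take0.
have [J_le_k|k_lt_J] := leqP J k; first by apply: take_le; rewrite J_gt0.
by rewrite !take_oversize ?size_ns ?size_ns' ?sum_ns ?sum_ns' // ltnW.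
Qed.

Lemma excess1_add_size s : all (fun x => 0 < x) s -> excess s 1 + size s = sumn s.
Proof.
move=> s_pos; have := excess_add_size s 1; rewrite muln1 => ->.
suff /eqP-> : \sum_(x <- s) (1 - x) == 0 by [].
by rewrite sum_nat_seq_eq0; apply: sub_all s_pos => x /=; rewrite subn_eq0.
Qed.

Lemma all_le1_nseq s : all (fun x => 0 < x) s -> all (fun x => x <= 1) s ->
  s = nseq (size s) 1.
Proof.
move=> s_pos s_le1; apply/all_pred1P/allP => x xs.
by have := allP s_pos x xs; have := allP s_le1 x xs; rewrite /=; lia.
Qed.

Lemma seq_bounds s : s != [::] ->
  exists L U, [/\ L \in s, U \in s & {in s, forall x, L <= x <= U}].
Proof.
elim: s => // x s IH _; have [->|s_nil] := eqVneq s [::].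
  exists x, x; split; rewrite ?mem_seq1 // => y.
  by rewrite mem_seq1 => /eqP->; rewrite leqnn.
have [L [U [Ls Us s_range]]] := IH s_nil.
exists (minn x L), (maxn x U); split.
- by rewrite inE; case: leqP => _; rewrite ?eqxx ?Ls ?orbT.
- by rewrite inE; case: leqP => _; rewrite ?eqxx ?Us ?orbT.
- move=> y; rewrite inE => /predU1P[->|/s_range]; first by rewrite geq_minl leq_maxl.
  by move=> /andP[Ly yU]; rewrite geq_min leq_max Ly yU !orbT.
Qed.

End Compositions.

Section DiscreteKaramata.
Variables (R : realFieldType) (g : nat -> R) (L U : nat).

Let D t := g t.+1 - g t.
Let D2 t := D t - D t.-1.

Lemma first_difference_telescope x : (L <= x)%N ->
  D x = D L + \sum_(L.+1 <= t < x.+1) D2 t.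
Proof. by move=> Lx; rewrite big_add1 /= telescope_sumr // addrC subrK. Qed.

(* The hinge [x |-> (x - t)_+] carries the second difference of [g] at [t]. *)
Lemma hinge_expansion i : (L + i <= U)%N ->
  g (L + i) = g L + D L * i%:R + \sum_(L.+1 <= t < U) D2 t * (L + i - t)%:R.
Proof.
elim: i => [|i IH] iU.
  rewrite addn0 mulr0 addr0 big_nat big1 ?addr0 // => t /andP[Lt _].
  by rewrite (_ : L - t = 0)%N ?mulr0 //; lia.
have hinge_step t : (L + i.+1 - t = (L + i - t) + (t <= L + i))%N.
  by case: leqP => /=; lia.
under eq_bigr => t _ do rewrite hinge_step natrD mulrDr.
have indicator_sum : \sum_(L.+1 <= t < U) D2 t * (t <= L + i)%:R
    = \sum_(L.+1 <= t < (L + i).+1) D2 t.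
  rewrite (big_cat_nat _ (n := (L + i).+1)) /=; [|lia|lia].
  have -> : \sum_((L + i).+1 <= t < U) D2 t * (t <= L + i)%:R = 0.
    by rewrite big_nat big1 // => t /andP[Lit _]; rewrite leqNgt Lit mulr0.
  by rewrite addr0 !big_nat; apply: eq_bigr => t /andP[_ tLi]; rewrite -ltnS tLi mulr1.
have telescope := first_difference_telescope (leq_addr i L).
have iU' : (L + i < U)%N by rewrite -addnS.
have {}IH := IH (ltnW iU').
rewrite big_split /= indicator_sum.
by move: telescope IH; rewrite addnS -natr1 /D; lra.
Qed.

Lemma sum_hinge_expansion (s : seq nat) : {in s, forall x, (L <= x <= U)%N} ->
  \sum_(x <- s) g x = (size s)%:R * g L + D L * (excess s L)%:R
    + \sum_(L.+1 <= t < U) D2 t * (excess s t)%:R.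
Proof.
move=> s_range; rewrite big_seq_cond.
under eq_bigr => x /andP[xs _].
  have /andP[Lx xU] := s_range x xs.
  rewrite -{1}(subnKC Lx) hinge_expansion subnKC //.
over.
rewrite -big_seq_cond !big_split /= exchange_big /=.
congr (_ + _ + _).
- by rewrite -sum1_size natr_sum mulr_suml; under [RHS]eq_bigr do rewrite mul1r.
- by rewrite /excess natr_sum mulr_sumr.
- by apply: eq_bigr => t _; rewrite /excess natr_sum mulr_sumr.
Qed.

Lemma sum_le_of_excess_le (a b : seq nat) :
  size a = size b ->
  {in a, forall x, (L <= x <= U)%N} -> {in b, forall x, (L <= x <= U)%N} ->
  (forall t, (L < t < U)%N -> g t *+ 2 <= g t.-1 + g t.+1) ->
  excess b L = excess a L -> (forall t, (excess b t <= excess a t)%N) ->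
  \sum_(x <- b) g x <= \sum_(x <- a) g x.
Proof.
move=> size_ab a_range b_range g_convex eL excess_le.
rewrite (sum_hinge_expansion a_range) (sum_hinge_expansion b_range) size_ab eL.
rewrite lerD2l big_nat [leRHS]big_nat; apply: ler_sum => t Lt_U.
apply: ler_wpM2l; last by rewrite ler_nat.
have t_gt0 : (0 < t)%N by case/andP: Lt_U => + _; apply: leq_ltn_trans.
have := g_convex t Lt_U; rewrite /D2 /D prednK // mulr2n; lra.
Qed.

End DiscreteKaramata.

Section Karamata.
Variable R : realFieldType.

Lemma karamata (g : nat -> R) (a b : seq nat) L U :
  sorted geq b -> majorizes a b -> {in a, forall x, (L <= x <= U)%N} ->
  (forall t, (L < t < U)%N -> g t *+ 2 <= g t.-1 + g t.+1) ->
  \sum_(x <- b) g x <= \sum_(x <- a) g x.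
Proof.
move=> b_sorted ab a_range g_convex.
have [b_range eL excess_le] := majorizes_range b_sorted ab a_range.
case: ab => size_ab _ _.
exact: sum_le_of_excess_le size_ab a_range b_range g_convex eL excess_le.
Qed.

Lemma karamata_concave (g : nat -> R) (a b : seq nat) L U :
  sorted geq b -> majorizes a b -> {in a, forall x, (L <= x <= U)%N} ->
  (forall t, (L < t < U)%N -> g t.-1 + g t.+1 <= g t *+ 2) ->
  \sum_(x <- a) g x <= \sum_(x <- b) g x.
Proof.
move=> b_sorted ab a_range g_concave; rewrite -lerN2 -!sumrN.
apply: karamata b_sorted ab a_range _ => t /g_concave.
by rewrite -opprD mulNrn lerN2.
Qed.

End Karamata.

Section LogKaramata.
Variable R : realType.
Implicit Types (w : nat -> R) (a b s : seq nat).

Lemma prod_expR_ln w s : {in s, forall x, 0 < w x} ->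
  \prod_(x <- s) w x = expR (\sum_(x <- s) ln (w x)).
Proof.
move=> w_gt0; rewrite expR_sum; apply: eq_big_seq => x xs.
by rewrite lnK // posrE w_gt0.
Qed.

Lemma prod_le_log_convex w a b L U :
  sorted geq b -> majorizes a b -> {in a, forall x, (L <= x <= U)%N} ->
  (forall x, (L <= x <= U)%N -> 0 < w x) ->
  (forall t, (L < t < U)%N -> w t ^+ 2 <= w t.-1 * w t.+1) ->
  \prod_(x <- b) w x <= \prod_(x <- a) w x.
Proof.
move=> b_sorted ab a_range w_gt0 w_convex.
have [b_range _ _] := majorizes_range b_sorted ab a_range.
rewrite !prod_expR_ln ?ler_expR => [|x /a_range|x /b_range]; try exact: w_gt0.
apply: karamata b_sorted ab a_range _ => t /[dup] /andP[Lt tU] /w_convex.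
have [w0 w1 w2] : [/\ 0 < w t, 0 < w t.-1 & 0 < w t.+1] by split; apply: w_gt0; lia.
by rewrite -lnXn // -lnM // ler_ln // posrE ?mulr_gt0 ?exprn_gt0.
Qed.

Lemma prod_le_log_concave w a b L U :
  sorted geq b -> majorizes a b -> {in a, forall x, (L <= x <= U)%N} ->
  (forall x, (L <= x <= U)%N -> 0 < w x) ->
  (forall t, (L < t < U)%N -> w t.-1 * w t.+1 <= w t ^+ 2) ->
  \prod_(x <- a) w x <= \prod_(x <- b) w x.
Proof.
move=> b_sorted ab a_range w_gt0 w_concave.
have [b_range _ _] := majorizes_range b_sorted ab a_range.
rewrite !prod_expR_ln ?ler_expR => [|x /b_range|x /a_range]; try exact: w_gt0.
apply: karamata_concave b_sorted ab a_range _ => t /[dup] /andP[Lt tU] /w_concave.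
have [w0 w1 w2] : [/\ 0 < w t, 0 < w t.-1 & 0 < w t.+1] by split; apply: w_gt0; lia.
by rewrite -lnXn // -lnM // ler_ln // posrE ?mulr_gt0 ?exprn_gt0.
Qed.

End LogKaramata.

Section GibbsWeights.
Variables (R : realType) (w : nat -> R).
Hypothesis w_ge0 : forall s, (1 <= s)%N -> 0 <= w s.

Lemma prod_ge0_pos s : all (fun x => 0 < x)%N s -> 0 <= \prod_(x <- s) w x.
Proof. by move=> s_pos; rewrite big_seq prodr_ge0 // => x /(allP s_pos)/w_ge0. Qed.

Lemma log_convex_neighbours_gt0 s : log_convex w -> (2 <= s)%N -> 0 < w s ->
  0 < w s.-1 /\ 0 < w s.+1.
Proof.
move=> w_convex s_ge2 ws_gt0.
have : 0 < w s.-1 * w s.+1 := lt_le_trans (exprn_gt0 2 ws_gt0) (w_convex s s_ge2).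
rewrite lt0r mulf_eq0 negb_or => /andP[/andP[w1_neq0 w2_neq0] _].
by rewrite !lt0r w1_neq0 w2_neq0 !w_ge0 //; lia.
Qed.

Lemma log_convex_vanish_or_gt0 : log_convex w ->
  (forall s, (2 <= s)%N -> w s = 0) \/ (forall s, (1 <= s)%N -> 0 < w s).
Proof.
move=> w_convex; have [w2_gt0|w2_le0] := ltrP 0 (w 2%N); [right|left].
- have w_gt0 i : 0 < w i.+2.
    by elim: i => // i IH; exact: (log_convex_neighbours_gt0 w_convex _ IH).2.
  case=> [//|[_|s _]]; last exact: w_gt0.
  exact: (log_convex_neighbours_gt0 w_convex _ w2_gt0).1.
- suff w_eq0 i : w i.+2 = 0 by case=> [|[|s]] // _; apply: w_eq0.
  elim: i => [|i IH]; first by apply/eqP; rewrite eq_le w2_le0 w_ge0.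
  apply/eqP; rewrite eq_le w_ge0 // andbT leNgt; apply/negP => w_gt0.
  have i3_ge2 : (1 < i.+3)%N by [].
  by have := (log_convex_neighbours_gt0 w_convex i3_ge2 w_gt0).1; rewrite /= IH ltxx.
Qed.

Lemma log_concave_gt0_between L U : log_concave w -> (1 <= L)%N ->
  0 < w L -> 0 < w U -> forall x, (L <= x <= U)%N -> 0 < w x.
Proof.
move=> [_ no_internal_zero] L_ge1 wL_gt0 wU_gt0 x /andP[Lx xU].
rewrite lt0r w_ge0 ?andbT; last exact: leq_trans L_ge1 Lx.
apply/eqP => wx_eq0.
have [Ltx|xtL|eLx] := ltngtP L x; last by rewrite eLx wx_eq0 ltxx in wL_gt0.
- have [xtU|Utx|exU] := ltngtP x U; last by rewrite -exU wx_eq0 ltxx in wU_gt0.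
  + exact: no_internal_zero L x U L_ge1 Ltx xtU (conj wL_gt0 (conj wx_eq0 wU_gt0)).
  + by move: xU; rewrite leqNgt Utx.
- by move: Lx; rewrite leqNgt xtL.
Qed.

Lemma prod_le_prec_log_convex n k ns ns' : log_convex w ->
  Ink n k ns -> Ink n k ns' -> prec k ns ns' ->
  \prod_(x <- ns') w x <= \prod_(x <- ns) w x.
Proof.
move=> w_convex Ins Ins' ns_prec; have ab := majorizes_of_prec Ins Ins' ns_prec.
have [size_ns _ ns_pos sum_ns] := InkP Ins.
have [size_ns' ns'_sorted ns'_pos sum_ns'] := InkP Ins'.
have [w_vanish|w_gt0] := log_convex_vanish_or_gt0 w_convex.
  have [/hasP[x xns' x_ge2]|/hasPn ns'_le1] := boolP (has (fun x => 1 < x)%N ns').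
    by rewrite (big_rem x xns') /= w_vanish // mul0r prod_ge0_pos.
  have ns'_ones : all (fun x => x <= 1)%N ns'.
    by apply/allP => x /ns'_le1; rewrite -leqNgt.
  have ns_ones : all (fun x => x <= 1)%N ns.
    have /eqP excess_ns' : excess ns' 1 == 0%N by rewrite excess_eq0.
    rewrite -excess_eq0; apply/eqP; move: (excess1_add_size ns_pos).
    by move: (excess1_add_size ns'_pos); rewrite excess_ns' size_ns size_ns' sum_ns sum_ns'; lia.
  case: ns_prec.1.
  by rewrite (all_le1_nseq ns_pos ns_ones) (all_le1_nseq ns'_pos ns'_ones) size_ns size_ns'.
apply: (prod_le_log_convex (L := 1%N) (U := n)) ns'_sorted ab _ _ _.
- move=> x xns; rewrite (allP ns_pos x xns) -sum_ns sumnE (big_rem x xns) /=.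
  exact: leq_addr.
- by move=> x /andP[x_ge1 _]; apply: w_gt0.
- by move=> t /andP[t_gt1 _]; apply: w_convex.
Qed.

Lemma prod_le_prec_log_concave n k ns ns' : log_concave w ->
  Ink n k ns -> Ink n k ns' -> prec k ns ns' ->
  \prod_(x <- ns) w x <= \prod_(x <- ns') w x.
Proof.
move=> w_concave Ins Ins' ns_prec; have ab := majorizes_of_prec Ins Ins' ns_prec.
have [_ _ ns_pos _] := InkP Ins; have [_ ns'_sorted ns'_pos _] := InkP Ins'.
have [/hasP[x xns /eqP wx_eq0]|/hasPn w_neq0] := boolP (has (fun x => w x == 0) ns).
  by rewrite (big_rem x xns) /= wx_eq0 mul0r prod_ge0_pos.
have [ns_nil|ns_neq_nil] := eqVneq ns [::].
  by case: ab; rewrite ns_nil => /esym/size0nil-> _ _.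
have w_gt0 x : x \in ns -> 0 < w x.
  by move=> xns; rewrite lt0r w_neq0 // w_ge0 // (allP ns_pos x xns).
have [L [U [Lns Uns ns_range]]] := seq_bounds ns_neq_nil.
have L_ge1 : (1 <= L)%N := allP ns_pos L Lns.
apply: (prod_le_log_concave (L := L) (U := U)) ns'_sorted ab ns_range _ _.
- exact: log_concave_gt0_between w_concave L_ge1 (w_gt0 L Lns) (w_gt0 U Uns).
- by move=> t /andP[Lt _]; apply: w_concave.1; lia.
Qed.

End GibbsWeights.

Section GibbsMixture.
Variables (R : realType) (d : measure_display) (T : measurableType d).
Variables (nu : {measure set T -> \bar R}) (V : nat -> nat -> T -> R) (W : nat -> T -> R).
Hypothesis V_ge0 : forall n k th, (1 <= k <= n)%N -> 0 <= V n k th.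
Hypothesis W_ge0 : forall s th, (1 <= s)%N -> 0 <= W s th.
Hypothesis V_meas : forall n k, (1 <= k <= n)%N -> measurable_fun [set: T] (V n k).
Hypothesis W_meas : forall s, (1 <= s)%N -> measurable_fun [set: T] (W s).

Lemma gibbs_mixture_eppf_le n k ns ns' : (1 <= k <= n)%N ->
  Ink n k ns -> Ink n k ns' ->
  (forall th, \prod_(j <- ns') W j th <= \prod_(j <- ns) W j th) ->
  (gibbs_mixture_eppf nu V W n ns' <= gibbs_mixture_eppf nu V W n ns)%E.
Proof.
move=> k_range /InkP[size_ns _ ns_pos _] /InkP[size_ns' _ ns'_pos _] prod_le.
rewrite /gibbs_mixture_eppf size_ns size_ns'.
have integrand_meas s : all (fun x => 0 < x)%N s ->
    measurable_fun [set: T] (fun th => (V n k th * \prod_(j <- s) W j th)%:E).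
  move=> s_pos; apply/measurable_EFinP/measurable_funM; first exact: V_meas.
  by apply: measurable_prod => j /(allP s_pos)/W_meas.
apply: ge0_le_integral => //; try exact: integrand_meas.
- move=> th _; rewrite lee_fin mulr_ge0 ?V_ge0 //.
  by apply: prod_ge0_pos => // s; apply: W_ge0.
- by move=> th _; rewrite lee_fin ler_wpM2l ?V_ge0.
Qed.

End GibbsMixture.

Unset Implicit Arguments. Set Strict Implicit. Set Printing Implicit Defensive.

Theorem theorem3p5 (R : realType) (d : measure_display) (T : measurableType d)
  (nu : {measure set T -> \bar R})
  (V : nat -> nat -> T -> R) (W : nat -> T -> R)
  (V_ge0 : forall n k th, (1 <= k <= n)%N -> 0 <= V n k th)
  (W_ge0 : forall s th, (1 <= s)%N -> 0 <= W s th)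
  (V_meas : forall n k, (1 <= k <= n)%N -> measurable_fun [set: T] (V n k))
  (W_meas : forall s, (1 <= s)%N -> measurable_fun [set: T] (W s))
  (Pi : forall n, (1 <= n)%N ->
     random_partition_with_EPPF n (gibbs_mixture_eppf nu V W n)) :
  forall n, (1 <= n)%N ->
    ((forall th, log_convex (fun s => W s th)) ->
       balance_averse n (gibbs_mixture_eppf nu V W n)) /\
    ((forall th, log_concave (fun s => W s th)) ->
       balance_seeking n (gibbs_mixture_eppf nu V W n)).
Proof.
have eppf_le := gibbs_mixture_eppf_le nu V_ge0 W_ge0 V_meas W_meas.
move=> n _; split=> W_shape k ns ns' k_range Ins Ins' ns_prec.
- apply: (eppf_le _ _ _ _ k_range Ins Ins') => th.
  exact: (prod_le_prec_log_convex (W_ge0^~ th) (W_shape th) Ins Ins' ns_prec).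
- apply: (eppf_le _ _ _ _ k_range Ins' Ins) => th.
  exact: (prod_le_prec_log_concave (W_ge0^~ th) (W_shape th) Ins Ins' ns_prec).
Qed.
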